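(* Let $G_R=(V,E_R)$ and $G_M=(V,E_M)$ be two strongly connected directed graphs on the same vertex set $V$, $|V|=n$, with weight matrices $W_R=[w^R_{ij}]$ and $W_M=[w^M_{ij}]$. Suppose that (1) $\sum_{j\neq i}w^R_{ji}=\sum_{j\ne i}w^M_{ji}=1$ for all $i\in V$ (i.e. $W_R$ and $W_M$ are doubly stochastic), and (2) for every pair of nodes $i,j\in V$: $w^R_{ij}+w^R_{ji}=w^M_{ij}+w^M_{ji}$. Then for every $r>0$ the two-graph Moran process with resident graph $G_R$ and mutant graph $G_M$ has the Moran fixation probability, i.e. $f_{G_R,G_M}(r)=f_{\mathrm{Moran}}(r)$.
   Context: Two-graph Moran process: the vertex set is $V=\{1,\dots,n\}$; there is a resident graph $G_R=(V,E_R)$ and a mutant graph $G_M=(V,E_M)$, each strongly connected, with weight matrices $W_R=[w^R_{ij}]$ and $W_M=[w^M_{ij}]$ that are row-stochastic ($\sum_j w^R_{ij}=\sum_j w^M_{ij}=1$ for every $i$), where $w^R_{ij}>0$ iff $(i,j)\in E_R$ and $w^M_{ij}>0$ iff $(i,j)\in E_M$. The state is the mutant set $S\subseteq V$. Residents have fitness $1$ and mutants fitness $r>0$. In each step a vertex $i$ is chosen with probability proportional to its fitness (total fitness $F(S)=r|S|+n-|S|$); if $i$ is a mutant it picks $j$ with probability $w^M_{ij}$ and $j$ becomes a mutant, and if $i$ is a resident it picks $j$ with probability $w^R_{ij}$ and $j$ becomes a resident. Absorption occurs at $S=\emptyset$ (extinction) or $S=V$ (fixation). With $f(S)$ the fixation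 probability from $S$, the fixation probability is $f_{G_R,G_M}(r)=\frac1n\sum_{u\in V}f(\{u\})$. The Moran fixation probability is $f_{\mathrm{Moran}}(r)=\frac{1-1/r}{1-1/r^n}$ for $r\neq1$ (and $1/n$ for $r=1$), the fixation probability when both graphs are the complete graph. *)

From HB Require Import structures.
From mathcomp Require Import all_boot all_order all_algebra.
From mathcomp Require Import all_classical all_reals all_analysis.
Set Implicit Arguments. Unset Strict Implicit. Unset Printing Implicit Defensive.
Import Order.TTheory GRing.Theory Num.Theory.
Import numFieldNormedType.Exports.
Local Open Scope ring_scope.

(* Vertex set V = 'I_n; a weighted digraph is a matrix W : 'M[R]_n,
   with edge set {(i,j) | 0 < W i j}. *)

Definition row_stochastic (R : realType) (n : nat) (W : 'M[R]_n) : Prop :=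
  (forall i j, 0 <= W i j) /\ (forall i, \sum_j W i j = 1).

Definition strongly_connected (R : realType) (n : nat) (W : 'M[R]_n) : Prop :=
  forall i j : 'I_n, connect [rel a b | 0 < W a b] i j.

Definition fitness (R : realType) (n : nat) (r : R) (S : {set 'I_n}) (i : 'I_n) : R :=
  if i \in S then r else 1.

Definition total_fitness (R : realType) (n : nat) (r : R) (S : {set 'I_n}) : R :=
  r * #|S|%:R + (n - #|S|)%:R.

Definition next_state (n : nat) (S : {set 'I_n}) (i j : 'I_n) : {set 'I_n} :=
  if i \in S then j |: S else S :\ j.

Definition trans_prob (R : realType) (n : nat) (WR WM : 'M[R]_n) (r : R)
    (S T : {set 'I_n}) : R :=
  \sum_i \sum_j
    (fitness r S i / total_fitness r S) *
    (if i \in S then WM i j else WR i j) *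
    (if next_state S i j == T then 1 else 0).

Fixpoint fix_by (R : realType) (n : nat) (WR WM : 'M[R]_n) (r : R) (k : nat)
    (S : {set 'I_n}) : R :=
  match k with
  | 0 => if S == [set: 'I_n]%SET then 1 else 0
  | k'.+1 => \sum_(T : {set 'I_n}) trans_prob WR WM r S T * fix_by WR WM r k' T
  end.

Definition fix_prob (R : realType) (n : nat) (WR WM : 'M[R]_n) (r : R)
    (S : {set 'I_n}) : R :=
  limn (fun k => fix_by WR WM r k S).

Definition fixation_probability (R : realType) (n : nat) (WR WM : 'M[R]_n) (r : R) : R :=
  n%:R^-1 * \sum_(u : 'I_n) fix_prob WR WM r [set u].

Definition moran_fixation (R : realType) (n : nat) (r : R) : R :=
  if r == 1 then n%:R^-1 else (1 - r^-1) / (1 - (r ^+ n)^-1).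

From HB Require Import structures.
From mathcomp Require Import all_boot all_order all_algebra.
From mathcomp Require Import all_classical all_reals all_analysis.
From mathcomp Require Import ring lra.
Import numFieldNormedType.Exports.
Import Order.TTheory GRing.Theory Num.Theory.
Local Open Scope ring_scope.
Set Implicit Arguments. Unset Strict Implicit. Unset Printing Implicit Defensive.

(* The fixation probability from a state S depends only on |S|: it is the Moran
   value h |S| with h k = (sum_(m < k) r^-m) / (sum_(m < n) r^-m).  For a doubly
   stochastic matrix the weight of the edges leaving S equals that of the edges
   entering S; with the symmetry hypothesis this makes the W_M-weight c of the
   edges leaving S equal to the W_R-weight of the edges entering S.  Hence from S
   the chain gains a mutant with probability r c / F(S) and loses one with
   probability c / F(S), and h |S| is harmonic because
   r (h (k+1) - h k) = h k - h (k-1).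
   A harmonic h with values in [0, 1], equal to 1 exactly at V, is the absorption
   probability at V: h (1 - h) decreases in expectation by the one-step variance
   of h, which is positive off the absorbing states (by strong connectivity of the
   mutant graph a mutant can invade), so the mass on transient states decays
   geometrically. *)

Lemma connect_exit_edge (T : finType) (e : rel T) (A : {set T}) x y :
  connect e x y -> x \in A -> y \notin A ->
  exists a b, [/\ a \in A, b \notin A & e a b].
Proof.
move=> /connectP [p]; elim: p x => [|z p IHp] x /=; first by move=> _ -> ->.
case/andP => exz ezp ylast xA yA.
have [zA | zA] := boolP (z \in A); first exact: IHp ezp ylast zA yA.
by exists x, z.
Qed.

Section FiniteMarkovChain.
Variables (R : realType) (T : finType) (P : T -> T -> R).

Definition expect_next (f : T -> R) (s : T) : R := \sum_t P s t * f t.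

Local Notation E := expect_next.

Hypothesis P_ge0 : forall s t, 0 <= P s t.
Hypothesis P_sum1 : forall s, \sum_t P s t = 1.

Lemma expect_next_cst c s : E (fun=> c) s = c.
Proof. by rewrite /E -mulr_suml P_sum1 mul1r. Qed.

Lemma expect_nextD f g s : E (fun t => f t + g t) s = E f s + E g s.
Proof. by rewrite /E -big_split; apply: eq_bigr => t _; rewrite mulrDr. Qed.

Lemma expect_nextZ a f s : E (fun t => a * f t) s = a * E f s.
Proof. by rewrite /E mulr_sumr; apply: eq_bigr => t _; rewrite mulrCA. Qed.

Lemma expect_next_le f g s : (forall t, f t <= g t) -> E f s <= E g s.
Proof. by move=> fg; apply: ler_sum => t _; apply: ler_wpM2l. Qed.

Lemma iter_expect_next_fixed k f s : (forall s, E f s = f s) -> iter k E f s = f s.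
Proof. by move=> Ef; elim: k s => //= k IHk s; rewrite (funext IHk). Qed.

Lemma iter_expect_nextD k f g s :
  iter k E (fun t => f t + g t) s = iter k E f s + iter k E g s.
Proof. by elim: k s => //= k IHk s; rewrite (funext IHk) expect_nextD. Qed.

Lemma iter_expect_nextZ k a f s : iter k E (fun t => a * f t) s = a * iter k E f s.
Proof. by elim: k s => //= k IHk s; rewrite (funext IHk) expect_nextZ. Qed.

Lemma iter_expect_next_le k f g s :
  (forall t, f t <= g t) -> iter k E f s <= iter k E g s.
Proof.
by move=> fg; elim: k s => [|k IHk] s /=; [apply: fg | apply: expect_next_le].
Qed.

Section HarmonicAbsorption.
Variable h : T -> R.
Hypothesis h_ge0 : forall s, 0 <= h s.
Hypothesis h_le1 : forall s, h s <= 1.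
Hypothesis h_harmonic : forall s, E h s = h s.
Hypothesis h_moves : forall s, 0 < h s < 1 -> exists2 t, 0 < P s t & h t != h s.

Definition step_var s := E (fun t => (h t - h s) ^+ 2) s.

Definition hvar s := h s * (1 - h s).

Lemma expect_next_hvar s : E hvar s = hvar s - step_var s.
Proof.
have -> : hvar = fun t => - 1 * (h t - h s) ^+ 2 + ((1 - 2 * h s) * h t + h s ^+ 2).
  by apply: funext => t; rewrite /hvar; ring.
rewrite expect_nextD expect_nextZ expect_nextD expect_nextZ expect_next_cst.
by rewrite h_harmonic /hvar /step_var; ring.
Qed.

Lemma step_var_gt0 s : 0 < h s < 1 -> 0 < step_var s.
Proof.
move=> /h_moves[t Pst hts]; rewrite /step_var /E (bigD1 t) //=.
apply: ltr_wpDr; first by apply: sumr_ge0 => u _; rewrite mulr_ge0 ?sqr_ge0.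
by rewrite mulr_gt0 // exprn_even_gt0 //= subr_eq0.
Qed.

Lemma hvar_eq0 s : ~~ (0 < h s < 1) -> hvar s = 0.
Proof.
have := h_ge0 s; have := h_le1 s; rewrite /hvar => h1 h0.
case/nandP; rewrite -leNgt => hs.
- have -> : h s = 0 by lra.
  by rewrite mul0r.
- have -> : h s = 1 by lra.
  by rewrite subrr mulr0.
Qed.

Lemma expect_next_hvar_contract :
  exists2 q, 0 <= q < 1 & forall s, E hvar s <= q * hvar s.
Proof.
pose g := \big[Num.min/1]_(s | 0 < h s < 1) step_var s.
have g_gt0 : 0 < g by apply: lt_bigmin => // s; apply: step_var_gt0.
have g_le1 : g <= 1 by apply: bigmin_le_id.
exists (1 - g); first by apply/andP; split; lra.
move=> s; rewrite expect_next_hvar.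
have [hs | hs] := boolP (0 < h s < 1).
  have g_le : g <= step_var s by apply: bigmin_le_cond.
  have := h_ge0 s; have := h_le1 s; rewrite /hvar; nra.
rewrite hvar_eq0 // mulr0 sub0r oppr_le0.
by apply: sumr_ge0 => t _; rewrite mulr_ge0 ?sqr_ge0.
Qed.

Definition interior_part t := if 0 < h t < 1 then h t else 0.

Lemma absorbed_add_interior_part :
  (fun t => (if h t == 1 then 1 else 0) + interior_part t) = h.
Proof.
apply: funext => t; rewrite /interior_part.
have [ht | /hvar_eq0/eqP] := boolP (0 < h t < 1).
  by case/andP: ht => _ /lt_eqF ->; rewrite add0r.
by rewrite mulf_eq0 subr_eq0 => /orP[/eqP-> | /eqP<-];
  rewrite ?eqxx ?(eq_sym 0) ?oner_eq0 addr0.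
Qed.

Lemma iter_interior_part_geometric s :
  exists c q, [/\ 0 <= q < 1 &
    forall k, 0 <= iter k E interior_part s <= c * q ^+ k].
Proof.
have hvar_ge0 t : 0 <= hvar t by rewrite /hvar mulr_ge0 ?subr_ge0.
pose m := \big[Num.min/1]_(t | 0 < h t < 1) hvar t.
have m_gt0 : 0 < m.
  by apply: lt_bigmin => // t /andP[? ?]; rewrite /hvar mulr_gt0 ?subr_gt0.
have interior_le t : interior_part t <= m^-1 * hvar t.
  rewrite /interior_part; case: ifP => [ht | _].
    have m_le : m <= hvar t by apply: bigmin_le_cond.
    by rewrite ler_pdivlMl //; have := h_le1 t; nra.
  by rewrite mulr_ge0 ?invr_ge0 ?(ltW m_gt0).
have [q q01 contract] := expect_next_hvar_contract.
have hvar_decay k t : iter k E hvar t <= q ^+ k * hvar t.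
  elim: k t => [|k IHk] t /=; first by rewrite mul1r.
  apply: le_trans (expect_next_le _ IHk) _.
  by rewrite expect_nextZ exprSr -mulrA ler_wpM2l ?exprn_ge0 //; case/andP: q01.
exists (m^-1 * hvar s), q; split=> // k; apply/andP; split.
  rewrite -(iter_expect_next_fixed k s (expect_next_cst 0)).
  by apply: iter_expect_next_le => t; rewrite /interior_part; case: ifP.
apply: le_trans (iter_expect_next_le k s interior_le) _.
by rewrite iter_expect_nextZ -mulrA [_ * q ^+ k]mulrC ler_wpM2l ?invr_ge0 ?(ltW m_gt0).
Qed.

Theorem harmonic_absorption s :
  (iter k E (fun t => if h t == 1 then 1 else 0) s @[k --> \oo] --> h s)%classic.
Proof.
have [c [q [/andP[q_ge0 q_lt1] interior_bound]]] := iter_interior_part_geometric s.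
have iter_absorbed k :
    iter k E (fun t => if h t == 1 then 1 else 0) s = h s - iter k E interior_part s.
  apply/eqP; rewrite eq_sym subr_eq -iter_expect_nextD absorbed_add_interior_part.
  by rewrite iter_expect_next_fixed.
have lower : (h s - c * q ^+ k @[k --> \oo] --> h s)%classic.
  rewrite -[X in (_ --> X)%classic](subr0 (h s)) -(mulr0 c).
  apply: cvgB; first exact: cvg_cst.
  by apply: cvgM; [exact: cvg_cst | apply: cvg_expr; rewrite ger0_norm].
apply: (squeeze_cvgr _ lower (cvg_cst (h s))); apply: nearW => k.
by rewrite iter_absorbed; have := interior_bound k; case/andP => ? ?; apply/andP; split; lra.
Qed.

End HarmonicAbsorption.
End FiniteMarkovChain.

Lemma row_stochastic_col_sum (R : realType) (n : nat) (W : 'M[R]_n) :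
  row_stochastic W -> (forall i, \sum_(j | j != i) W j i = 1) ->
  forall i, \sum_j W j i = 1.
Proof.
move=> [W_ge0 W_row] W_offdiag.
have col_sum i : \sum_j W j i = W i i + 1 by rewrite (bigD1 i) //= W_offdiag.
have trace0 : \sum_i W i i = 0.
  apply: (addIr (\sum_(i < n) (1 : R))); rewrite add0r -big_split /=.
  under eq_bigr do rewrite -col_sum.
  by rewrite exchange_big; apply: eq_bigr => i _; rewrite W_row.
by move=> i; rewrite col_sum (psumr_eq0P _ trace0) ?add0r.
Qed.

Section CutWeights.
Variables (R : realType) (n : nat).
Implicit Types (W : 'M[R]_n) (A B : {set 'I_n}).

Definition cut_weight W A B := \sum_(i in A) \sum_(j in B) W i j.

Lemma cut_weightE W A B :
  cut_weight W A B = \sum_i \sum_j (if (i \in A) && (j \in B) then W i j else 0).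
Proof.
rewrite /cut_weight big_mkcond; apply: eq_bigr => i _.
by rewrite big_mkcond; case: (i \in A) => //=; rewrite big1.
Qed.

Lemma sum_setC (F : 'I_n -> R) A : \sum_i F i = \sum_(i in A) F i + \sum_(i in ~: A) F i.
Proof. by rewrite (bigID (mem A)) /=; congr (_ + _); apply: eq_bigl => i; rewrite inE. Qed.

Lemma cut_weight_balance W A :
  (forall i, \sum_j W i j = 1) -> (forall j, \sum_i W i j = 1) ->
  cut_weight W A (~: A) = cut_weight W (~: A) A.
Proof.
move=> W_row W_col; apply: (@addrI _ (cut_weight W A A)).
have out_A : cut_weight W A A + cut_weight W A (~: A) = #|A|%:R.
  rewrite -big_split /= -sum1_card natr_sum; apply: eq_bigr => i _.
  by rewrite -sum_setC W_row.
have in_A : cut_weight W A A + cut_weight W (~: A) A = #|A|%:R.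
  rewrite /cut_weight [X in X + _]exchange_big [X in _ + X]exchange_big /=.
  rewrite -big_split /= -sum1_card natr_sum; apply: eq_bigr => j _.
  by rewrite -sum_setC W_col.
by rewrite out_A in_A.
Qed.

Lemma cut_weight_symmetrized W A B :
  cut_weight W A B + cut_weight W B A = \sum_(i in A) \sum_(j in B) (W i j + W j i).
Proof.
rewrite /cut_weight [X in _ + X]exchange_big -big_split /=.
by apply: eq_bigr => i _; rewrite -big_split.
Qed.

End CutWeights.

Section MoranAbsorption.
Variables (R : realType) (n : nat) (r : R).
Hypothesis n_gt0 : (0 < n)%N.
Hypothesis r_gt0 : 0 < r.

Definition geom_part k := \sum_(0 <= m < k) r^-1 ^+ m.

Definition moran_fix k := geom_part k / geom_part n.

Lemma geom_range_gt0 a b : (a < b)%N -> 0 < \sum_(a <= m < b) r^-1 ^+ m.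
Proof.
move=> lt_ab; rewrite big_ltn // ltr_pwDl ?exprn_gt0 ?invr_gt0 //.
by apply: sumr_ge0 => m _; rewrite exprn_ge0 // invr_ge0 ltW.
Qed.

Lemma geom_part_gt0 k : (0 < k)%N -> 0 < geom_part k.
Proof. exact: geom_range_gt0. Qed.

Lemma moran_fix_step k : moran_fix k.+1 - moran_fix k = r^-1 ^+ k / geom_part n.
Proof. by rewrite /moran_fix /geom_part big_nat_recr //= mulrDl addrAC subrr add0r. Qed.

Lemma moran_fix_step_gt0 k : 0 < moran_fix k.+1 - moran_fix k.
Proof. by rewrite moran_fix_step divr_gt0 ?exprn_gt0 ?invr_gt0 ?geom_part_gt0. Qed.

Lemma moran_fix_balance k :
  (0 < k)%N -> r * (moran_fix k.+1 - moran_fix k) = moran_fix k - moran_fix k.-1.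
Proof.
case: k => // k _; rewrite !moran_fix_step exprS mulrA mulrA mulfV ?mul1r //.
by rewrite gt_eqF.
Qed.

Lemma moran_fix0 : moran_fix 0 = 0.
Proof. by rewrite /moran_fix /geom_part big_geq // mul0r. Qed.

Lemma moran_fixn : moran_fix n = 1.
Proof. by rewrite /moran_fix mulfV // gt_eqF // geom_part_gt0. Qed.

Lemma moran_fix_ge0 k : 0 <= moran_fix k.
Proof.
have geom_part_ge0 j : 0 <= geom_part j.
  by apply: sumr_ge0 => m _; rewrite exprn_ge0 // invr_ge0 ltW.
exact: divr_ge0.
Qed.

Lemma moran_fix_lt1 k : (k < n)%N -> moran_fix k < 1.
Proof.
move=> lt_kn; rewrite /moran_fix ltr_pdivrMr ?geom_part_gt0 // mul1r.
rewrite /geom_part (big_cat_nat (leq0n k) (ltnW lt_kn)) /= ltrDl.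
exact: geom_range_gt0.
Qed.

Lemma moran_fix_le1 k : (k <= n)%N -> moran_fix k <= 1.
Proof.
by rewrite leq_eqVlt => /predU1P[-> | /moran_fix_lt1/ltW]; rewrite ?moran_fixn.
Qed.

Lemma moran_fix1 : moran_fix 1 = moran_fixation n r.
Proof.
rewrite /moran_fix /moran_fixation /geom_part big_nat1 expr0.
case: eqP => [-> | r_neq1].
  by rewrite invr1 (eq_bigr (fun=> 1)) => [|m _]; rewrite ?expr1n // sumr_const_nat subn0 div1r.
have geom_sum : 1 - (r ^+ n)^-1 = (1 - r^-1) * geom_part n.
  by rewrite /geom_part big_mkord -exprVn -opprB subrX1 -mulNr opprB.
rewrite geom_sum invfM mulrA mulfV ?mul1r //.
by rewrite subr_eq0 eq_sym invr_eq1; apply/eqP.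
Qed.

End MoranAbsorption.

Section TwoGraphMoran.
Variables (R : realType) (n : nat) (WR WM : 'M[R]_n) (r : R).
Hypothesis n_gt0 : (0 < n)%N.
Hypothesis r_gt0 : 0 < r.
Hypothesis WR_stoch : row_stochastic WR.
Hypothesis WM_stoch : row_stochastic WM.
Implicit Types S T : {set 'I_n}.

Local Notation P := (trans_prob WR WM r).

Lemma total_fitness_gt0 S : 0 < total_fitness r S.
Proof.
rewrite /total_fitness; have [-> | S_gt0] := posnP #|S|.
  by rewrite mulr0 add0r subn0 ltr0n.
by rewrite ltr_pwDl ?ler0n // mulr_gt0 ?ltr0n.
Qed.

Lemma sum_fitness S : \sum_i fitness r S i = total_fitness r S.
Proof.
have card_compl : #|~: S| = (n - #|S|)%N by rewrite cardsCs finset.setCK card_ord.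
rewrite (sum_setC _ S) /fitness.
rewrite [X in X + _](eq_bigr (fun=> r)) => [|i ->] //.
rewrite [X in _ + X](eq_bigr (fun=> 1)) => [|i]; last by rewrite inE => /negbTE ->.
by rewrite !sumr_const card_compl /total_fitness mulr_natr.
Qed.

Definition birth_prob S i j :=
  fitness r S i / total_fitness r S * (if i \in S then WM i j else WR i j).

Lemma birth_prob_ge0 S i j : 0 <= birth_prob S i j.
Proof.
case: WR_stoch WM_stoch => [WR_ge0 _] [WM_ge0 _].
rewrite mulr_ge0 ?divr_ge0 ?(ltW (total_fitness_gt0 S)) //; rewrite /fitness.
  by case: ifP => _; rewrite ?ltW.
by case: ifP.
Qed.

Lemma sum_birth_prob S : \sum_i \sum_j birth_prob S i j = 1.
Proof.
case: WR_stoch WM_stoch => [_ WR_row] [_ WM_row].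
have row_sum i : \sum_j (if i \in S then WM i j else WR i j) = 1 by case: (i \in S).
rewrite (eq_bigr (fun i => fitness r S i / total_fitness r S)) => [|i _]; last first.
  by rewrite /birth_prob -mulr_sumr row_sum mulr1.
by rewrite -mulr_suml sum_fitness mulfV // gt_eqF // total_fitness_gt0.
Qed.

Lemma expect_next_trans_prob f S :
  expect_next P f S = \sum_i \sum_j birth_prob S i j * f (next_state S i j).
Proof.
rewrite /expect_next /trans_prob.
under eq_bigr do rewrite mulr_suml; rewrite exchange_big; apply: eq_bigr => i _.
under eq_bigr do rewrite mulr_suml; rewrite exchange_big; apply: eq_bigr => j _.
rewrite (bigD1 (next_state S i j)) //= eqxx mulr1 big1 ?addr0 // => T.
by rewrite eq_sym => /negbTE ->; rewrite mulr0 mul0r.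
Qed.

Lemma trans_prob_ge0 S T : 0 <= P S T.
Proof.
apply: sumr_ge0 => i _; apply: sumr_ge0 => j _.
by apply: mulr_ge0; [exact: birth_prob_ge0 | case: ifP].
Qed.

Lemma sum_trans_prob S : \sum_T P S T = 1.
Proof.
have := expect_next_trans_prob (fun=> 1) S; rewrite /expect_next.
under eq_bigr do rewrite mulr1; move=> ->.
by under eq_bigr do under eq_bigr do rewrite mulr1; rewrite sum_birth_prob.
Qed.

Hypothesis WR_col : forall j, \sum_i WR i j = 1.
Hypothesis WM_col : forall j, \sum_i WM i j = 1.
Hypothesis W_sym : forall i j, WR i j + WR j i = WM i j + WM j i.
Hypothesis WM_conn : strongly_connected WM.

Local Notation h S := (moran_fix n r #|S|).

Lemma cut_weight_out_in S : cut_weight WM S (~: S) = cut_weight WR (~: S) S.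
Proof.
case: WR_stoch WM_stoch => [_ WR_row] [_ WM_row].
have sym_cut : cut_weight WR S (~: S) + cut_weight WR (~: S) S =
               cut_weight WM S (~: S) + cut_weight WM (~: S) S.
  rewrite !cut_weight_symmetrized.
  by apply: eq_bigr => i _; apply: eq_bigr => j _; apply: W_sym.
move: sym_cut; rewrite !cut_weight_balance //; lra.
Qed.

Lemma moran_fix_drift S :
  expect_next P (fun T => h T) S - h S =
  (r * (moran_fix n r #|S|.+1 - h S) * cut_weight WM S (~: S)
   + (moran_fix n r #|S|.-1 - h S) * cut_weight WR (~: S) S) / total_fitness r S.
Proof.
have -> : expect_next P (fun T => h T) S - h S = expect_next P (fun T => h T - h S) S.
  by rewrite expect_nextD (expect_next_cst sum_trans_prob).
rewrite expect_next_trans_prob !cut_weightE mulrDl !(mulr_sumr, mulr_suml) -big_split.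
apply: eq_bigr => i _; rewrite /= !(mulr_sumr, mulr_suml) -big_split.
apply: eq_bigr => j _.
rewrite /birth_prob /fitness /next_state !inE.
case iS: (i \in S); case jS: (j \in S) => /=.
- have -> : j |: S = S by apply/finset.setUidPr; rewrite finset.sub1set.
  ring.
- by rewrite cardsU1 jS add1n; ring.
- by rewrite (cardsD1 j S) jS add1n; ring.
- have -> : S :\ j = S by apply/finset.setDidPl; rewrite disjoint_sym disjoints1 jS.
  ring.
Qed.

Lemma moran_fix_harmonic S : expect_next P (fun T => h T) S = h S.
Proof.
apply/eqP; rewrite -subr_eq0 moran_fix_drift cut_weight_out_in; apply/eqP.
have [S0 | S_gt0] := posnP #|S|.
  have -> : cut_weight WR (~: S) S = 0.
    by rewrite /cut_weight big1 // => i _; rewrite (cards0_eq S0) big_set0.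
  by rewrite !mulr0 add0r mul0r.
by rewrite moran_fix_balance //; ring.
Qed.

Lemma moran_fix_moves S :
  0 < h S < 1 -> exists2 T, 0 < P S T & h T != h S.
Proof.
case/andP => h_gt0 h_lt1.
have [i iS] : exists i, i \in S.
  by apply/set0Pn; apply: contraTneq h_gt0 => ->; rewrite cards0 moran_fix0 ltxx.
have [j] : exists j, j \in ~: S.
  apply/set0Pn; apply: contraTneq h_lt1 => compl0.
  by rewrite -(finset.setCK S) compl0 finset.setC0 cardsT card_ord moran_fixn // ltxx.
rewrite inE => jS.
have [a [b [aS bS WMab]]] := connect_exit_edge (WM_conn i j) iS jS.
exists (b |: S); last first.
  by rewrite cardsU1 bS add1n -subr_eq0 gt_eqF ?moran_fix_step_gt0.
have term_ge0 k l : 0 <= birth_prob S k l * (if next_state S k l == b |: S then 1 else 0).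
  by rewrite mulr_ge0 ?birth_prob_ge0 //; case: ifP.
rewrite /trans_prob (bigD1 a) //= (bigD1 b) //= ltr_wpDr ?ltr_wpDr //.
- by apply: sumr_ge0 => k _; apply: sumr_ge0 => l _; apply: term_ge0.
- by apply: sumr_ge0 => l _; apply: term_ge0.
- rewrite /next_state aS eqxx mulr1 mulr_gt0 //.
  by rewrite /fitness aS divr_gt0 ?total_fitness_gt0.
Qed.

Lemma moran_fix_eq1 S : (h S == 1) = (S == [set: 'I_n]).
Proof.
apply/eqP/eqP => [h1 | ->]; last by rewrite cardsT card_ord moran_fixn.
apply/eqP; rewrite eqEcard finset.subsetT cardsT card_ord /= leqNgt.
by apply/negP => /(moran_fix_lt1 n_gt0 r_gt0); rewrite h1 ltxx.
Qed.

Lemma fix_prob_moran_fix S : fix_prob WR WM r S = h S.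
Proof.
have fix_byE k :
    fix_by WR WM r k = iter k (expect_next P) (fun T => if h T == 1 then 1 else 0).
  by elim: k => [|k IHk]; apply: funext => T /=; rewrite ?moran_fix_eq1 ?IHk.
rewrite /fix_prob; under eq_fun do rewrite fix_byE.
apply: cvg_lim => //; apply: (harmonic_absorption trans_prob_ge0 sum_trans_prob).
- by move=> T; apply: moran_fix_ge0.
- by move=> T; apply: moran_fix_le1 => //; have := max_card T; rewrite card_ord.
- exact: moran_fix_harmonic.
- exact: moran_fix_moves.
Qed.

End TwoGraphMoran.

Theorem theorem2 (R : realType) (n : nat) (WR WM : 'M[R]_n) :
  (0 < n)%N ->
  row_stochastic WR -> row_stochastic WM ->
  strongly_connected WR -> strongly_connected WM ->
  (forall i : 'I_n, \sum_(j | j != i) WR j i = 1) ->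
  (forall i : 'I_n, \sum_(j | j != i) WM j i = 1) ->
  (forall i j : 'I_n, WR i j + WR j i = WM i j + WM j i) ->
  forall r : R, 0 < r ->
  fixation_probability WR WM r = moran_fixation n r.
Proof.
move=> n_gt0 WR_stoch WM_stoch _ WM_conn WR_offdiag WM_offdiag W_sym r r_gt0.
have WR_col := row_stochastic_col_sum WR_stoch WR_offdiag.
have WM_col := row_stochastic_col_sum WM_stoch WM_offdiag.
rewrite /fixation_probability (eq_bigr (fun=> moran_fix n r 1)) => [|u _]; last first.
  by rewrite fix_prob_moran_fix ?cards1.
rewrite sumr_const card_ord -[moran_fix _ _ _ *+ _]mulr_natl mulrA mulVf ?mul1r ?moran_fix1 //.
by rewrite pnatr_eq0 -lt0n.
Qed.
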